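(* (i) $\mathbf{V}_{\mathcal{L}}=\mathbf{LZ}^{\bullet}\circ\mathbf{D}$. (ii) $\mathbf{V}_{\mathcal{R}}=\mathbf{RZ}^{\bullet}\circ\mathbf{D}$.
   Context: An idempotent semiring is an algebra $(S,+,\cdot)$ with $(S,+)$, $(S,\cdot)$ bands and both distributive laws; addition not assumed commutative. Green's relations: $a\,\mathcal{L}^{\bullet}\,b$ iff $ab=a$, $ba=b$; $a\,\mathcal{R}^{\bullet}\,b$ iff $ab=b$, $ba=a$. $\mathbf{V}_{\mathcal{L}}$ (resp. $\mathbf{V}_{\mathcal{R}}$) is the class of idempotent semirings $S$ on which $\mathcal{L}^{\bullet}$ (resp. $\mathcal{R}^{\bullet}$) is the least distributive lattice congruence; equivalently the variety of idempotent semirings satisfying $x\approx xy+x+xy$ (resp. $x\approx yx+x+yx$). $\mathbf{D}$ is the variety of distributive lattices (idempotent semirings satisfying $x+y\approx y+x$, $xy\approx yx$, $x+xy\approx x$); $\mathbf{LZ}^{\bullet}$ (resp. $\mathbf{RZ}^{\bullet}$) is the variety of idempotent semirings satisfying $xy\approx x$ (resp. $xy\approx y$). For classes $\mathbf{V},\mathbf{W}$ of idempotent semirings, the Mal'cev product $\mathbf{V}\circ\mathbf{W}$ is the class of idempotent semirings $S$ admitting a congruence $\rho$ with $S/\rho\in\mathbf{W}$ and every $\rho$-class (a subsemiring) belonging to $\mathbf{V}$. *)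

Set Implicit Arguments.

(** Idempotent semirings: (S,+) and (S,.) bands, both distributive laws;
    addition NOT assumed commutative. *)
Record IdemSemiring := {
  carrier :> Type;
  add : carrier -> carrier -> carrier;
  mul : carrier -> carrier -> carrier;
  addA : forall x y z, add x (add y z) = add (add x y) z;
  mulA : forall x y z, mul x (mul y z) = mul (mul x y) z;
  addI : forall x, add x x = x;
  mulI : forall x, mul x x = x;
  mulDl : forall x y z, mul (add x y) z = add (mul x z) (mul y z);
  mulDr : forall x y z, mul x (add y z) = add (mul x y) (mul x z)
}.

Arguments add {i} _ _.
Arguments mul {i} _ _.

Definition V_L (S : IdemSemiring) : Prop :=
  forall x y : S, x = add (add (mul x y) x) (mul x y).

Definition V_R (S : IdemSemiring) : Prop :=
  forall x y : S, x = add (add (mul y x) x) (mul y x).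

Definition congruence (S : IdemSemiring) (rho : S -> S -> Prop) : Prop :=
  (forall x, rho x x) /\
  (forall x y, rho x y -> rho y x) /\
  (forall x y z, rho x y -> rho y z -> rho x z) /\
  (forall x y u v, rho x y -> rho u v -> rho (add x u) (add y v)) /\
  (forall x y u v, rho x y -> rho u v -> rho (mul x u) (mul y v)).

(** S/rho belongs to D (distributive lattices): the defining identities of D
    hold in the quotient, i.e. hold modulo rho. *)
Definition quot_in_D (S : IdemSemiring) (rho : S -> S -> Prop) : Prop :=
  (forall x y : S, rho (add x y) (add y x)) /\
  (forall x y : S, rho (mul x y) (mul y x)) /\
  (forall x y : S, rho (add x (mul x y)) x).

(** A subsemiring (given as a subset P of S, with the induced operations)
    belongs to LZ^• (identity xy = x), resp. RZ^• (identity xy = y). *)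
Definition sub_in_LZ (S : IdemSemiring) (P : S -> Prop) : Prop :=
  forall x y : S, P x -> P y -> mul x y = x.

Definition sub_in_RZ (S : IdemSemiring) (P : S -> Prop) : Prop :=
  forall x y : S, P x -> P y -> mul x y = y.

(** Mal'cev product V ∘ W: S admits a congruence rho with S/rho in W and
    every rho-class (a subsemiring) in V. *)
Definition malcev
  (V : forall S : IdemSemiring, (S -> Prop) -> Prop)
  (Wq : forall S : IdemSemiring, (S -> S -> Prop) -> Prop)
  (S : IdemSemiring) : Prop :=
  exists rho : S -> S -> Prop,
    @congruence S rho /\ Wq S rho /\ (forall a : S, V S (fun x => rho a x)).

(** In a semiring of [V_L] the absorption laws [x + xy = x = xy + x] and left
    regularity [xyx = xy] make Green's relation [L] a congruence; modulo [L]
    both operations commute and absorb, so the quotient is a distributive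
    lattice, and an [L]-class is a left-zero band by the very definition of [L].
    Conversely, if [rho] is a congruence with distributive-lattice quotient and
    left-zero classes, then [a := xy + x + xy] is [rho]-equivalent to [x] and
    [x a = a], so [a = x].  Part (ii) is part (i) for the semiring with the
    multiplication reversed. *)
From Stdlib Require Import Setoid.

Section VL.
Variable S : IdemSemiring.
Hypothesis HL : V_L S.
Local Notation "x + y" := (@add S x y).
Local Notation "x * y" := (@mul S x y).

Lemma V_L_absorb_l x y : x + x * y = x.
Proof. rewrite (HL x y) at 1. rewrite <- addA, addI. symmetry; exact (HL x y). Qed.

Lemma V_L_absorb_r x y : x * y + x = x.
Proof. rewrite (HL x y) at 2. rewrite !addA, addI. symmetry; exact (HL x y). Qed.

Lemma V_L_left_regular x y : x * y * x = x * y.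
Proof.
  assert (E : x * y * (x + x * y) = x * y * x + x * y).
  { rewrite mulDr, mulI. reflexivity. }
  rewrite V_L_absorb_l in E. rewrite E. apply V_L_absorb_r.
Qed.

Definition L_rel (a b : S) : Prop := a * b = a /\ b * a = b.

Lemma L_rel_trans a b c : L_rel a b -> L_rel b c -> L_rel a c.
Proof.
  intros [hab hba] [hbc hcb]; split.
  - rewrite <- hab at 1. rewrite <- mulA, hbc. exact hab.
  - rewrite <- hcb at 1. rewrite <- mulA, hba. exact hcb.
Qed.

Lemma L_rel_add a b u v : L_rel a b -> L_rel u v -> L_rel (a + u) (b + v).
Proof.
  assert (K : forall a b u v, a * b = a -> u * v = u -> (a + u) * (b + v) = a + u).
  { intros a' b' u' v' hab huv.
    rewrite mulDl, !mulDr, hab, huv, V_L_absorb_l, V_L_absorb_r. reflexivity. }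
  intros [hab hba] [huv hvu]; split; apply K; assumption.
Qed.

Lemma L_rel_mul a b u v : L_rel a b -> L_rel u v -> L_rel (a * u) (b * v).
Proof.
  (* [a u b v = a (b u b) v = a (b u) v = a u], using [a b = a] and [u v = u]. *)
  assert (K : forall a b u v, a * b = a -> u * v = u -> a * u * (b * v) = a * u).
  { intros a' b' u' v' hab huv. rewrite <- hab at 1.
    replace (a' * b' * u' * (b' * v')) with (a' * (b' * u' * b' * v'))
      by (rewrite !mulA; reflexivity).
    rewrite V_L_left_regular, <- (mulA _ b'), huv, mulA, hab. reflexivity. }
  intros [hab hba] [huv hvu]; split; apply K; assumption.
Qed.

Lemma L_rel_congruence : congruence S L_rel.
Proof.
  split; [intro x; split; apply mulI|].
  split; [intros x y [h1 h2]; split; assumption|].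
  split; [exact L_rel_trans|].
  split; [exact L_rel_add | exact L_rel_mul].
Qed.

Lemma L_rel_quot_in_D : quot_in_D S L_rel.
Proof.
  split; [|split].
  - intros x y; split;
      rewrite mulDl, !mulDr, !mulI, V_L_absorb_l, V_L_absorb_r; reflexivity.
  - assert (K : forall x y, x * y * (y * x) = x * y).
    { intros x y. rewrite mulA, <- (mulA _ x y y), mulI. apply V_L_left_regular. }
    intros x y; split; apply K.
  - intros x y. rewrite V_L_absorb_l. split; apply mulI.
Qed.

Lemma L_rel_class_left_zero a : sub_in_LZ S (L_rel a).
Proof.
  intros x y hx hy.
  enough (L_rel x y) as [hxy _] by exact hxy.
  apply L_rel_trans with a; [destruct hx; split|]; assumption.
Qed.

Lemma V_L_malcev : malcev sub_in_LZ quot_in_D S.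
Proof.
  exists L_rel.
  split; [exact L_rel_congruence|].
  split; [exact L_rel_quot_in_D | exact L_rel_class_left_zero].
Qed.
End VL.

Lemma malcev_V_L (S : IdemSemiring) : malcev sub_in_LZ quot_in_D S -> V_L S.
Proof.
  intros [rho [[rrefl [rsym [rtrans [radd _]]]] [[qaddC [_ qabs]] hLZ]]] x y.
  set (a := add (add (mul x y) x) (mul x y)).
  assert (hxa : rho x a).
  { apply rsym. unfold a. apply rtrans with (add x (mul x y)); [|apply qabs].
    apply radd; [|apply rrefl].
    apply rtrans with (add x (mul x y)); [apply qaddC | apply qabs]. }
  assert (hxa_mul : mul x a = a).
  { unfold a. rewrite !mulDr, mulI, mulA, mulI. reflexivity. }
  rewrite <- hxa_mul. symmetry. apply (hLZ x); [apply rrefl | exact hxa].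
Qed.

Definition dual_semiring (S : IdemSemiring) : IdemSemiring.
Proof.
  refine (@Build_IdemSemiring (carrier S) (@add S) (fun x y => @mul S y x)
            _ _ _ _ _ _).
  - apply addA.
  - intros; symmetry; apply mulA.
  - apply addI.
  - apply mulI.
  - intros; apply mulDr.
  - intros; apply mulDl.
Defined.

Section Duality.
Variable S : IdemSemiring.
Local Notation Sd := (dual_semiring S).

Lemma V_R_dual : V_R S <-> V_L Sd.
Proof. split; intros h x y; exact (h x y). Qed.

Lemma congruence_dual rho : congruence Sd rho <-> congruence S rho.
Proof.
  split; intros [rrefl [rsym [rtrans [radd rmul]]]];
    repeat split; try assumption;
    intros x y u v h h'; exact (rmul u v x y h' h).
Qed.

Lemma quot_in_D_dual rho : congruence S rho -> quot_in_D Sd rho <-> quot_in_D S rho.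
Proof.
  (* Only absorption changes shape: [x + yx] and [x + xy] agree modulo the
     commutativity of multiplication. *)
  intros [rrefl [_ [rtrans [radd _]]]].
  split; intros [addC [mulC absorb]];
    (split; [exact addC|split; [intros x y; exact (mulC y x)|]]);
    intros x y.
  - apply rtrans with (@add S x (@mul S y x)); [|exact (absorb x y)].
    apply radd; [apply rrefl | exact (mulC y x)].
  - apply rtrans with (@add S x (@mul S x y)); [|exact (absorb x y)].
    apply radd; [apply rrefl | exact (mulC y x)].
Qed.

Lemma sub_in_LZ_dual P : sub_in_LZ Sd P <-> sub_in_RZ S P.
Proof. split; intros h x y hx hy; exact (h y x hy hx). Qed.

Lemma malcev_dual : malcev sub_in_RZ quot_in_D S <-> malcev sub_in_LZ quot_in_D Sd.
Proof.
  split; intros [rho [hcong [hquot hcls]]]; exists rho.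
  - split; [apply (proj2 (congruence_dual rho)); exact hcong|]. split.
    + apply (quot_in_D_dual _ hcong); exact hquot.
    + intro a; apply sub_in_LZ_dual, hcls.
  - apply (proj1 (congruence_dual rho)) in hcong.
    split; [exact hcong|]. split.
    + apply (quot_in_D_dual _ hcong); exact hquot.
    + intro a; apply sub_in_LZ_dual, hcls.
Qed.
End Duality.

Theorem theorem4p1 :
  (forall S : IdemSemiring, V_L S <-> malcev sub_in_LZ quot_in_D S) /\
  (forall S : IdemSemiring, V_R S <-> malcev sub_in_RZ quot_in_D S).
Proof.
  assert (part_i : forall S : IdemSemiring, V_L S <-> malcev sub_in_LZ quot_in_D S).
  { intro S; split; [apply V_L_malcev | apply malcev_V_L]. }
  split; [exact part_i|].
  intro S. rewrite V_R_dual, malcev_dual. apply part_i.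
Qed.
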